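(* Let $\mathcal{G}=(\vec V,\vec E)$ be a DAG with maximum (in plus out) degree $\Delta$, let $k\ge 2$, and let $V_i,V_j\in\vec V$ be non-adjacent. If $|\vec A_{ij}|\ge(2+\Delta^2)(\lceil\lg k\rceil+1)$, then an independence preserving augmentation $(\vec S_i^+,\vec S_j^+)$ of $(V_i,V_j)$ exists.
   Context: $\operatorname{\mathbf{DE}}(V)$ denotes the descendants of $V$ in $\mathcal{G}$; $\vec D_{ij}=\operatorname{\mathbf{DE}}(V_i)\cap\operatorname{\mathbf{DE}}(V_j)$ and $\vec A_{ij}=\vec V\setminus\vec D_{ij}$. For sets $\vec S_i,\vec S_j\subseteq\vec V\setminus\{V_i,V_j\}$, the ordered pair $(\vec S_i^+,\vec S_j^+)=(\vec S_i\cup\{V_i\},\vec S_j\cup\{V_j\})$ is an independence preserving augmentation (IPA) of $(V_i,V_j)$ if for some $\vec C\subset\vec V$, $\vec S_i^+$ and $\vec S_j^+$ are d-separated by $\vec C$ in $\mathcal{G}$. In the paper's construction the IPA has $|\vec S_i|=|\vec S_j|=\lceil\lg k\rceil$ with $\vec S_i,\vec S_j\subseteq\vec A_{ij}$. *)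

(* a DAG on a finite vertex type T, given by its edge relation E
   (E u v means u -> v). *)
From mathcomp Require Import all_boot.
Set Implicit Arguments. Unset Strict Implicit. Unset Printing Implicit Defensive.

Section DAG.
Variables (T : finType) (E : rel T).

Definition acyclic : Prop := forall x y, E x y -> ~~ connect E y x.

Definition adj (x y : T) : bool := E x y || E y x.

Definition degree (v : T) : nat := #|[set u | E u v]| + #|[set u | E v u]|.
Definition maxdeg : nat := \max_(v : T) degree v.

(* descendants DE(v) (v is its own descendant, reflexive closure) *)
Definition DE (v : T) : {set T} := [set w | connect E v w].
Definition Dij (vi vj : T) : {set T} := DE vi :&: DE vj.
Definition Aij (vi vj : T) : {set T} := ~: Dij vi vj.

Definition blocks_at (C : {set T}) (a w b : T) : bool :=
  if E a w && E b w then [disjoint DE w & C] else w \in C.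

Definition blocked (C : {set T}) (x : T) (s : seq T) : bool :=
  let p := x :: s in
  [exists i : 'I_(size p),
     [&& 0 < val i, val i < (size p).-1 &
         blocks_at C (nth x p (val i).-1) (nth x p (val i)) (nth x p (val i).+1)]].

Definition dsep (X Y C : {set T}) : Prop :=
  [/\ [disjoint X & Y], [disjoint X & C], [disjoint Y & C] &
      forall (x : T) (s : seq T), x \in X -> last x s \in Y ->
        path adj x s -> uniq (x :: s) -> blocked C x s].

Definition IPA (vi vj : T) (Si Sj : {set T}) : Prop :=
  [/\ Si \subset ~: [set vi; vj], Sj \subset ~: [set vi; vj] &
      exists C : {set T}, C \proper [set: T] /\ dsep (vi |: Si) (vj |: Sj) C].

End DAG.

From mathcomp Require Import all_boot zify.
Set Implicit Arguments. Unset Strict Implicit. Unset Printing Implicit Defensive.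

(* Put W = S_i^+ :|: S_j^+ and C = An(W) :\: W.  On a path from x in S_i^+ to y in
   S_j^+ without interior vertices in W, the vertex after x is either a non-collider
   ancestor of W, hence in C, or the start of a directed walk outside An(W), which
   must end in a collider with no descendant in C before reaching y; the only escape
   is x -> z <- y with z in An(W).  So C d-separates S_i^+ and S_j^+ as soon as no
   pair (x, y) is adjacent or has a common child in An(W).  For (V_i, V_j) such a
   child would give a common descendant of V_i and V_j in W, which lies in A_ij up
   to V_i, V_j.  For the other pairs it suffices that y is outside the radius-2 ball
   of x, of size at most 1 + Delta^2; choosing S_i outside V_i and the ball of V_j,
   then S_j outside V_j and the balls of S_i^+, consumes
   (2 + Delta^2)(ceil(lg k) + 1) vertices of A_ij. *)

Section AncestralSeparation.
Variables (T : finType) (E : rel T).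
Hypothesis acyclicE : acyclic E.

Definition ancestors (W : {set T}) : {set T} :=
  [set u | [exists w in W, connect E u w]].

Lemma mem_ancestors (W : {set T}) w : w \in W -> w \in ancestors W.
Proof. by move=> Ww; rewrite inE; apply/existsP; exists w; rewrite Ww connect0. Qed.

Lemma ancestors_connect (W : {set T}) u v :
  connect E u v -> v \in ancestors W -> u \in ancestors W.
Proof.
move=> Euv; rewrite !inE => /existsP [w /andP [Ww Evw]].
by apply/existsP; exists w; rewrite Ww (connect_trans Euv Evw).
Qed.

Lemma acyclic_asym u v : E u v -> E v u = false.
Proof. by move=> Euv; apply/negbTE; apply: contraNN (acyclicE Euv) => /connect1. Qed.

Variables X Y : {set T}.
Let W := X :|: Y.
Let C := ancestors W :\: W.

Lemma blocks_at_noncollider a w b : E w a || E w b -> w \in C -> blocks_at E C a w b.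
Proof. by rewrite /blocks_at => /orP [] /acyclic_asym -> //; rewrite andbF. Qed.

Lemma blocks_at_collider a w b :
  E a w -> E b w -> w \notin ancestors W -> blocks_at E C a w b.
Proof.
move=> Eaw Ebw nAw; rewrite /blocks_at Eaw Ebw disjoints_subset.
apply/subsetP => v; rewrite inE => Ewv; rewrite in_setC in_setD negb_and.
by apply/orP; right; apply: contra nAw; apply: ancestors_connect.
Qed.

Hypothesis nonadj_XY : forall x y, x \in X -> y \in Y -> ~~ adj E x y.
Hypothesis no_common_child_XY : forall x y z,
  x \in X -> y \in Y -> E x z -> E y z -> z \notin ancestors W.

Section Walk.
Variables (q : nat -> T) (n : nat).
Hypothesis q_adj : forall t, t < n -> adj E (q t) (q t.+1).

Definition blocked_within (a b : nat) : Prop :=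
  exists2 t, a < t < b & blocks_at E C (q t.-1) (q t) (q t.+1).

Lemma blocked_within_sub a b a' b' :
  a <= a' -> b' <= b -> blocked_within a' b' -> blocked_within a b.
Proof. by move=> le_a le_b [t lt_t blk]; exists t => //; lia. Qed.

Lemma blocked_directed a b t : b <= n -> q b \in ancestors W -> a < t <= b ->
  E (q t.-1) (q t) -> q t \notin ancestors W -> blocked_within a b.
Proof.
move=> le_bn Ab; have [d] := ubnP (b - t); elim: d t => // d IH t lt_d lt_t Et nAt.
have lt_tb : t < b.
  by rewrite ltn_neqAle (andP lt_t).2 andbT; apply: contraNneq nAt => ->.
have /orP [Et' | Et'] := q_adj (leq_trans lt_tb le_bn); last first.
  by exists t; [lia | apply: blocks_at_collider].
apply: (IH t.+1 _ _ Et'); [lia | lia |].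
by apply: contra nAt; apply: ancestors_connect (connect1 Et').
Qed.

Lemma blocked_W_free a b : a < b -> b <= n -> q a \in X -> q b \in Y ->
  (forall t, a < t < b -> q t \notin W) -> blocked_within a b.
Proof.
move=> lt_ab le_bn Xa Yb W_free.
have [eq_b | lt_a1b] : b = a.+1 \/ a.+1 < b by lia.
  by move: (@q_adj a); rewrite -eq_b (negbTE (nonadj_XY Xa Yb)) => /(_ le_bn).
have Wa1 : q a.+1 \notin W by apply: W_free; lia.
have Aa : q a \in ancestors W by apply: mem_ancestors; rewrite inE Xa.
have /orP [Ea1 | Ea1] := q_adj (ltnW (leq_trans lt_a1b le_bn)); last first.
  exists a.+1; [lia | apply: blocks_at_noncollider; first by rewrite Ea1].
  by rewrite inE Wa1 (ancestors_connect (connect1 Ea1) Aa).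
have [Aa1 | nAa1] := boolP (q a.+1 \in ancestors W); last first.
  apply: (@blocked_directed a b a.+1 le_bn _ _ Ea1 nAa1); last by lia.
  by apply: mem_ancestors; rewrite inE Yb orbT.
have /orP [Ea2 | Ea2] := q_adj (leq_trans lt_a1b le_bn).
  by exists a.+1; [lia | apply: blocks_at_noncollider; rewrite ?Ea2 ?orbT // inE Wa1].
have [eq_b | lt_a2b] : b = a.+2 \/ a.+2 < b by lia.
  by rewrite eq_b in Yb; move: (no_common_child_XY Xa Yb Ea1 Ea2); rewrite Aa1.
exists a.+2; [lia | apply: blocks_at_noncollider; first by rewrite Ea2].
rewrite inE (ancestors_connect (connect1 Ea2) Aa1) andbT.
by apply: W_free; lia.
Qed.

Lemma blocked_X_to_Y a b :
  a < b -> b <= n -> q a \in X -> q b \in Y -> blocked_within a b.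
Proof.
have [d] := ubnP (b - a); elim: d a b => // d IH a b lt_d lt_ab le_bn Xa Yb.
have [/existsP [[t lt_tb] /= /andP [lt_at Wt]] | no_W] :=
  boolP [exists t : 'I_b, (a < t) && (q t \in W)].
  case/setUP: Wt => [Xt | Yt].
    by apply: (blocked_within_sub _ _ (IH t b _ _ _ _ _)) => //; lia.
  by apply: (blocked_within_sub _ _ (IH a t _ _ _ _ _)) => //; lia.
apply: blocked_W_free => // t /andP [lt_at lt_tb]; apply: contraNN no_W => Wt.
by apply/existsP; exists (Ordinal lt_tb); rewrite lt_at.
Qed.

End Walk.

Theorem dsep_ancestors : [disjoint X & Y] -> dsep E X Y C.
Proof.
move=> dXY; split => //.
- by rewrite disjoints_subset; apply/subsetP => x Xx; rewrite !inE Xx.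
- by rewrite disjoints_subset; apply/subsetP => y Yy; rewrite !inE Yy orbT.
move=> x s Xx Ys path_s _.
have lt0s : 0 < size s.
  by case: s Ys {path_s} => //= Yx; rewrite (disjointFr dXY Xx) in Yx.
set q := nth x (x :: s).
have q_adj : forall t, t < size s -> adj E (q t) (q t.+1) by apply/(pathP x).
have Yq : q (size s) \in Y by rewrite /q (nth_last x (x :: s)).
have [t /andP [lt0t lt_ts] blk] := blocked_X_to_Y q_adj lt0s (leqnn _) Xx Yq.
have lt_t : t < size (x :: s) by rewrite /=; lia.
by apply/existsP; exists (Ordinal lt_t); rewrite /= lt0t lt_ts.
Qed.

End AncestralSeparation.

Lemma card_bigcup_le (I T : finType) (P : pred I) (F : I -> {set T}) :
  #|\bigcup_(i | P i) F i| <= \sum_(i | P i) #|F i|.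
Proof.
apply: (big_rec2 (fun (S : {set T}) k => #|S| <= k)); first by rewrite cards0.
move=> i B b _ le_Bb; apply: leq_trans (leq_of_leqif (leq_card_setU _ B)) _.
by rewrite leq_add2l.
Qed.

Lemma leq_card_setU1 (T : finType) (a : T) (A : {set T}) : #|a |: A| <= #|A|.+1.
Proof. by rewrite cardsU1 -add1n leq_add2r leq_b1. Qed.

Lemma exists_subset_avoiding (T : finType) (A B : {set T}) m :
  #|B| + m <= #|A| -> exists2 S : {set T}, S \subset A :\: B & #|S| = m.
Proof.
move=> le_m; exists [set x in take m (enum (A :\: B))].
  by apply/subsetP => x; rewrite inE => /mem_take; rewrite mem_enum.
rewrite cardsE; move: (take_uniq m (enum_uniq (mem (A :\: B)))) => /card_uniqP ->.
rewrite size_takel // -cardE cardsD.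
by have := subset_leq_card (subsetIr A B); lia.
Qed.

Section Ball.
Variables (T : finType) (E : rel T).

Definition nbhd (v : T) : {set T} := [set u | adj E v u].
(* Second neighbours other than [v] itself: this gives the bound 1 + Delta^2. *)
Definition ball2 (v : T) : {set T} :=
  v |: (nbhd v :|: \bigcup_(w in nbhd v) (nbhd w :\ v)).

Lemma mem_nbhdC u v : (u \in nbhd v) = (v \in nbhd u).
Proof. by rewrite !inE /adj orbC. Qed.

Lemma ball2_self v : v \in ball2 v.
Proof. exact: setU11. Qed.

Lemma ball2_adj u v : adj E u v -> v \in ball2 u.
Proof. by move=> adj_uv; rewrite !in_setU !inE adj_uv orbT. Qed.

Lemma ball2_common_child x y z : x != y -> E x z -> E y z -> y \in ball2 x.
Proof.
move=> ne_xy Exz Eyz; rewrite !in_setU; apply/orP; right; apply/orP; right.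
apply/bigcupP; exists z; first by rewrite inE /adj Exz.
by rewrite in_setD1 eq_sym ne_xy inE /adj Eyz orbT.
Qed.

Lemma ball2_sym u v : u \in ball2 v -> v \in ball2 u.
Proof.
case/setU1P => [-> | /setUP [Nu | /bigcupP [w Nw /setD1P [ne_uv Nu]]]].
- exact: ball2_self.
- by rewrite !in_setU -mem_nbhdC Nu orbT.
rewrite !in_setU; apply/orP; right; apply/orP; right.
by apply/bigcupP; exists w; rewrite 1?mem_nbhdC // in_setD1 eq_sym ne_uv -mem_nbhdC.
Qed.

Lemma card_nbhd v : #|nbhd v| <= maxdeg E.
Proof.
apply: leq_trans (@leq_bigmax _ (degree E) v); rewrite /degree addnC.
have -> : nbhd v = [set u | E v u] :|: [set u | E u v] by apply/setP => u; rewrite !inE.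
exact: leq_of_leqif (leq_card_setU _ _).
Qed.

Lemma card_ball2 v : #|ball2 v| <= 1 + maxdeg E ^ 2.
Proof.
set D := maxdeg E; set N := nbhd v.
have le_cover : #|\bigcup_(w in N) (nbhd w :\ v)| <= #|N| * D.-1.
  apply: leq_trans (card_bigcup_le _ _) _; rewrite -sum_nat_const.
  apply: leq_sum => w Nw; have := cardsD1 v (nbhd w).
  by rewrite -mem_nbhdC Nw; have := card_nbhd w; lia.
rewrite cardsU1; apply: leq_add (leq_b1 _) _.
apply: leq_trans (leq_of_leqif (leq_card_setU _ _)) _.
by have := card_nbhd v; rewrite -/N -/D; nia.
Qed.

Lemma card_ball2_cover (S : {set T}) :
  #|\bigcup_(s in S) ball2 s| <= #|S| * (1 + maxdeg E ^ 2).
Proof.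
apply: leq_trans (card_bigcup_le _ _) _; rewrite -sum_nat_const.
by apply: leq_sum => s _; apply: card_ball2.
Qed.

End Ball.

Section Augmentation.
Variables (T : finType) (E : rel T).
Hypothesis acyclicE : acyclic E.

Lemma common_child_not_ancestor (W : {set T}) vi vj z :
  W \subset [set vi; vj] :|: Aij E vi vj -> E vi z -> E vj z ->
  z \notin ancestors E W.
Proof.
move=> sub_W Eiz Ejz; rewrite inE; apply/existsP => -[w /andP [Ww Ezw]].
have Diw := connect_trans (connect1 Eiz) Ezw.
have Djw := connect_trans (connect1 Ejz) Ezw.
move/subsetP/(_ w Ww): sub_W; rewrite /Aij /Dij /DE !inE Diw Djw orbF.
by case/orP => /eqP ew; [move: (acyclicE Eiz) | move: (acyclicE Ejz)]; rewrite -ew Ezw.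
Qed.

Lemma IPA_far_apart vi vj (Si Sj : {set T}) :
  vi != vj -> ~~ adj E vi vj -> vi \notin Si -> vj \notin Sj ->
  Si \subset Aij E vi vj -> Sj \subset Aij E vi vj ->
  (forall x y, x \in vi |: Si -> y \in vj |: Sj -> (x, y) != (vi, vj) ->
     y \notin ball2 E x) ->
  IPA E vi vj Si Sj.
Proof.
move=> ne_ij nadj_ij Si_vi Sj_vj sub_Si sub_Sj far.
have dXY : [disjoint vi |: Si & vj |: Sj].
  apply/pred0P => x /=; apply/negP => /andP [Xx Yx].
  have ne : (x, x) != (vi, vj).
    by rewrite xpair_eqE; apply: contraNN ne_ij => /andP [/eqP <- /eqP <-].
  by move: (far x x Xx Yx ne); rewrite ball2_self.
have notY x : x \in Si -> x != vj.
  by move=> Six; apply: contraFneq (disjointFr dXY (setU1r vi Six)) => ->; rewrite setU11.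
have notX y : y \in Sj -> y != vi.
  move=> Sjy; apply: contraTneq Sjy => ->.
  by apply: contraFN (disjointFr dXY (setU11 vi Si)); apply: setU1r.
split.
- apply/subsetP => x Six; rewrite !inE negb_or notY // andbT.
  by apply: contraNneq Si_vi => <-.
- apply/subsetP => y Sjy; rewrite !inE negb_or notX //.
  by apply: contraNneq Sj_vj => <-.
exists (ancestors E ((vi |: Si) :|: (vj |: Sj)) :\: ((vi |: Si) :|: (vj |: Sj))).
split; last apply: dsep_ancestors => //.
- by rewrite properT; apply/negP => /eqP CT; move: (in_setT vi); rewrite -CT !inE eqxx.
- move=> x y Xx Yy; have [[-> ->] // | ne] := eqVneq (x, y) (vi, vj).
  by apply: contra (far x y Xx Yy ne); apply: ball2_adj.
move=> x y z Xx Yy Exz Eyz; have [[ex ey] | ne] := eqVneq (x, y) (vi, vj).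
  rewrite ex ey in Exz Eyz; apply: common_child_not_ancestor Exz Eyz.
  rewrite !subUset !sub1set !inE !eqxx orbT /=.
  by rewrite (subset_trans sub_Si (subsetUr _ _)) (subset_trans sub_Sj (subsetUr _ _)).
have ne_xy : x != y by apply: contraTneq Yy => <-; rewrite (disjointFr dXY Xx).
by move: (far x y Xx Yy ne); rewrite (ball2_common_child ne_xy Exz Eyz).
Qed.

End Augmentation.

Theorem lemma18 (T : finType) (E : rel T) (k : nat) (vi vj : T) :
  acyclic E -> 2 <= k -> vi != vj -> ~~ adj E vi vj ->
  (2 + maxdeg E ^ 2) * (up_log 2 k + 1) <= #|Aij E vi vj| ->
  exists Si Sj : {set T},
    [/\ IPA E vi vj Si Sj,
        Si \subset Aij E vi vj, Sj \subset Aij E vi vj,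
        #|Si| = up_log 2 k & #|Sj| = up_log 2 k].
Proof.
move=> acyc _ ne_ij nadj_ij.
set m := up_log 2 k; set A := Aij E vi vj => card_A.
have [Si sub_Si card_Si] :
    exists2 Si : {set T}, Si \subset A :\: (vi |: ball2 E vj) & #|Si| = m.
  apply: exists_subset_avoiding.
  by have := leq_card_setU1 vi (ball2 E vj); have := card_ball2 E vj; nia.
set far_Si := \bigcup_(s in vi |: Si) ball2 E s.
have [Sj sub_Sj card_Sj] :
    exists2 Sj : {set T}, Sj \subset A :\: (vj |: far_Si) & #|Sj| = m.
  have card_far : #|far_Si| <= m.+1 * (1 + maxdeg E ^ 2).
    apply: leq_trans (card_ball2_cover E (vi |: Si)) _.
    by rewrite leq_mul2r -card_Si leq_card_setU1 orbT.
  by apply: exists_subset_avoiding; have := leq_card_setU1 vj far_Si; nia.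
have mem_Si x : x \in Si -> x != vi /\ x \notin ball2 E vj.
  by move/(subsetP sub_Si); rewrite in_setD in_setU1 negb_or => /andP [/andP []].
have mem_Sj y : y \in Sj -> y != vj /\ y \notin far_Si.
  by move/(subsetP sub_Sj); rewrite in_setD in_setU1 negb_or => /andP [/andP []].
have Si_A : Si \subset A := subset_trans sub_Si (subsetDl _ _).
have Sj_A : Sj \subset A := subset_trans sub_Sj (subsetDl _ _).
exists Si, Sj; split => //; apply: IPA_far_apart => //.
- by apply/negP => /mem_Si [/eqP].
- by apply/negP => /mem_Sj [/eqP].
move=> x y Xx /setU1P [-> | /mem_Sj [_ far_y]] ne.
  case/setU1P: Xx ne => [-> | /mem_Si [_ far_x] _]; first by rewrite eqxx.
  by apply: contra far_x; apply: ball2_sym.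
by apply: contra far_y => y_x; apply/bigcupP; exists x.
Qed.
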